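(* Consider instances with divisible items. There is no (possibly randomized) mechanism $M$ that is individually rational, truthful in expectation and budget feasible in expectation, together with constants $\alpha>1-1/e$ and $\theta_0>0$, such that on every instance with $c_{\max}/B\le\theta_0$ the expected utility of $M$ is at least $\alpha U^\star$.
   Context: A buyer with budget $B>0$ faces a finite set $S$ of sellers; seller $i$ owns one item giving the buyer utility $u_i>0$ and has a private cost $c_i\ge0$; $c_{\max}=\max_i c_i$. Items are divisible: buying a fraction $x_i\in[0,1]$ costs seller $i$ the amount $x_ic_i$ and gives the buyer utility $x_iu_i$. $U^\star=\max\{\sum_iu_i\alpha_i:\alpha\in[0,1]^S,\ \sum_ic_i\alpha_i\le B\}$. A randomized mechanism maps reported costs to random fractions $x_i\in[0,1]$ and random payments $p_i\ge0$; its utility is $\sum_iu_ix_i$. It is truthful in expectation if for every seller $i$ and all reports, $\mathbb E[p_i-c_ix_i]$ is maximized (over $i$'s report, the others' reports fixed) by reporting the true cost $c_i$; individually rational in expectation if $\mathbb E[p_i]\ge c_i\mathbb E[x_i]$ under truthful reports; budget feasible in expectation if $\mathbb E[\sum_ip_i]\le B$. *)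

From HB Require Import structures.
From mathcomp Require Import all_boot all_order all_algebra.
From mathcomp Require Import all_classical all_reals all_analysis.
Set Implicit Arguments.
Unset Strict Implicit.
Unset Printing Implicit Defensive.
Import Order.TTheory GRing.Theory Num.Theory.
Local Open Scope ring_scope.

(* A randomized mechanism with randomness drawn from a probability space
   (Omega, P): given n, the (public) budget B and utilities u, and the
   reported cost vector, it returns for every random outcome w a pair
   (fractions x, payments p). *)
Definition mechanism (R : realType) (Omega : Type) :=
  forall n : nat, R -> ('I_n -> R) -> ('I_n -> R) -> Omega ->
    ('I_n -> R) * ('I_n -> R).

Section Mech.
Context {R : realType} {d : measure_display} {Omega : measurableType d}.
Variable (P : probability Omega R).

Definition valid_instance n (B : R) (u : 'I_n -> R) :=
  0 < B /\ forall i, 0 < u i.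

Definition nonneg_costs n (c : 'I_n -> R) := forall i, 0 <= c i.

Definition upd n (c : 'I_n -> R) (i : 'I_n) (b : R) : 'I_n -> R :=
  fun j => if j == i then b else c j.

Definition expect (f : Omega -> R) : \bar R := (\int[P]_w (f w)%:E)%E.

Definition alloc (M : mechanism R Omega) n B u c w (i : 'I_n) :=
  (M n B u c w).1 i.
Definition pay (M : mechanism R Omega) n B u c w (i : 'I_n) :=
  (M n B u c w).2 i.

Definition well_formed (M : mechanism R Omega) :=
  forall n B u c, valid_instance B u -> nonneg_costs c -> forall i : 'I_n,
    measurable_fun setT (fun w => alloc M B u c w i) /\
    measurable_fun setT (fun w => pay M B u c w i) /\
    (forall w, 0 <= alloc M B u c w i <= 1 /\ 0 <= pay M B u c w i).

Definition IR_in_expectation (M : mechanism R Omega) :=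
  forall n B u c, valid_instance B u -> nonneg_costs c -> forall i : 'I_n,
    ((c i)%:E * expect (fun w => alloc M B u c w i)
       <= expect (fun w => pay M B u c w i))%E.

Definition truthful_in_expectation (M : mechanism R Omega) :=
  forall n B u c, valid_instance B u -> nonneg_costs c ->
  forall (i : 'I_n) (b : R), 0 <= b ->
    (expect (fun w => (pay M B u (upd c i b) w i
                      - c i * alloc M B u (upd c i b) w i)%R)
     <= expect (fun w => (pay M B u c w i - c i * alloc M B u c w i)%R))%E.

Definition BF_in_expectation (M : mechanism R Omega) :=
  forall n B u c, valid_instance B u -> nonneg_costs c ->
    (expect (fun w => (\sum_(i < n) pay M B u c w i)%R) <= B%:E)%E.

Definition expected_utility (M : mechanism R Omega) n B (u c : 'I_n -> R) :=
  expect (fun w => \sum_(i < n) u i * alloc M B u c w i).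

End Mech.

Definition feasible_frac {R : realType} n (c : 'I_n -> R) (B : R)
  (a : 'I_n -> R) :=
  (forall i, 0 <= a i <= 1) /\ \sum_(i < n) c i * a i <= B.

Definition Ustar {R : realType} n (u c : 'I_n -> R) (B : R) : R :=
  sup [set \sum_(i < n) u i * a i | a in feasible_frac c B].

Definition cmax {R : realType} n (c : 'I_n -> R) : R :=
  \big[Num.max/0]_(i < n) c i.

From HB Require Import structures.
From mathcomp Require Import all_boot all_order all_algebra.
From mathcomp Require Import all_classical all_reals all_analysis.
From mathcomp Require Import ring lra.
Import Order.TTheory GRing.Theory Num.Theory.
Local Open Scope ring_scope.

(* Take n unit-utility sellers whose costs are i.i.d. on a discretised
   equal-revenue ladder, with budget n (E[cost] + eta).  By Myerson's payment
   identity, a truthful and individually rational mechanism pays each seller at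
   least its expected allocation (the ladder's virtual cost is 1), except on
   the lowest atom; budget feasibility thus caps the expected utility at
   n (E[cost] + eta + P(lowest atom)), which is about n (1 - 1/e).  On the
   other hand, by AM-GM the fractional optimum loses at most
   (total cost - n E[cost])^2 / (4 eta B) against n, and by independence this
   square has expectation at most n, so E[U*] >= n - O(1).  As n grows,
   c_max / B vanishes, which forces alpha <= 1 - 1/e. *)

Lemma sumr_by_parts {V : pzRingType} (G U : nat -> V) m :
  \sum_(k < m.+1) (G k - (if (k : nat) is k'.+1 then G k' else 0)) * U k =
  \sum_(k < m) G k * (U k - U k.+1) + G m * U m.
Proof.
elim: m => [|m IH]; first by rewrite big_ord1 big_ord0 /= subr0 add0r.
rewrite big_ord_recr /= IH big_ord_recr /= mulrBr mulrBl.
by rewrite addrA addrAC -!addrA; congr (_ + _); rewrite addrCA addrA subrK.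
Qed.

Section Ladder.
Context {R : realType}.

(* Costs [1 - s^k], [k <= m], with [P(cost <= 1 - s^k) = s^(m-k)]: a
   discretised equal-revenue distribution, whose virtual cost is 1 on every
   atom but the lowest one. *)
Definition ladder_cost (s : R) (k : nat) := 1 - s ^+ k.
Definition ladder_prob (s : R) (m k : nat) :=
  if k is 0 then s ^+ m else s ^+ (m - k) * (1 - s).
Definition ladder_mean (s : R) (m : nat) :=
  \sum_(k < m.+1) ladder_prob s m k * ladder_cost s k.

Lemma ladder_probE (s : R) m (k : 'I_m.+1) :
  ladder_prob s m k = s ^+ (m - k) - (if (k : nat) is k'.+1 then s ^+ (m - k') else 0).
Proof.
case: k => [[|k] lt_km] /=; rewrite ?subr0 ?subn0 // -(subnSK (lt_km : (k < m)%N)).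
by rewrite exprS; ring.
Qed.

Lemma ladder_virtual_cost (s : R) m k : (k < m)%N ->
  s ^+ (m - k) * (ladder_cost s k.+1 - ladder_cost s k) =
  ladder_prob s m k.+1 * (1 - ladder_cost s k.+1).
Proof.
move=> lt_km; rewrite /ladder_cost /= -(subnSK lt_km) !exprS; ring.
Qed.

Lemma ladder_prob_sum (s : R) m : \sum_(k < m.+1) ladder_prob s m k = 1.
Proof.
under eq_bigr do rewrite -[ladder_prob _ _ _]mulr1 ladder_probE.
rewrite (sumr_by_parts (fun k => s ^+ (m - k)) (fun=> 1)) subnn expr0 mulr1.
by rewrite big1 ?add0r // => k _; rewrite subrr mulr0.
Qed.

Lemma ladder_meanE (s : R) m :
  ladder_mean s m = 1 - s ^+ m - m%:R * (s ^+ m * (1 - s)).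
Proof.
rewrite /ladder_mean; under eq_bigr do rewrite /ladder_cost mulrBr mulr1.
rewrite sumrB ladder_prob_sum big_ord_recl /= expr0 mulr1 opprD addrA; congr (_ - _).
rewrite (eq_bigr (fun _ => s ^+ m * (1 - s))) ?sumr_const ?card_ord ?mulr_natl //.
by move=> k _; rewrite mulrAC -exprD /bump /= add1n subnK // ltn_ord.
Qed.

Context {s : R}.
Hypothesis s01 : 0 <= s <= 1.

Lemma ladder_prob_ge0 m k : 0 <= ladder_prob s m k.
Proof.
case/andP: s01 => s0 s1; case: k => [|k] /=; first exact: exprn_ge0.
by apply: mulr_ge0; [exact: exprn_ge0 | lra].
Qed.

Lemma ladder_cost_itv k : 0 <= ladder_cost s k <= 1.
Proof.
case/andP: s01 => s0 s1; rewrite /ladder_cost.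
by have := exprn_ge0 k s0; have := exprn_ile1 k s0 s1; lra.
Qed.

Lemma ladder_mean_itv m : 0 <= ladder_mean s m <= 1.
Proof.
apply/andP; split; first by apply: sumr_ge0 => k _;
  rewrite mulr_ge0 ?ladder_prob_ge0 //; case/andP: (ladder_cost_itv k).
rewrite -(ladder_prob_sum s m) ler_sum // => k _.
by rewrite ler_piMr ?ladder_prob_ge0 //; case/andP: (ladder_cost_itv k).
Qed.

(* Myerson's payment identity, discretised: local truthfulness between
   adjacent atoms and individual rationality at the top one force the
   expected payment to cover the expected allocation, up to the lowest atom. *)
Lemma ladder_myerson m (X Pay : nat -> R) :
  (forall k, (k < m)%N ->
     Pay k.+1 - ladder_cost s k * X k.+1 <= Pay k - ladder_cost s k * X k) ->
  ladder_cost s m * X m <= Pay m -> X 0%N <= 1 ->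
  \sum_(k < m.+1) ladder_prob s m k * X k - ladder_prob s m 0
    <= \sum_(k < m.+1) ladder_prob s m k * Pay k.
Proof.
move=> truthful ir X0_le1.
pose U k := Pay k - ladder_cost s k * X k.
have pow_ge0 k : 0 <= s ^+ (m - k) by rewrite exprn_ge0 //; case/andP: s01.
have shift : \sum_(k < m) ladder_prob s m k.+1 * ladder_cost s k.+1 * X k.+1 =
    \sum_(k < m.+1) ladder_prob s m k * ladder_cost s k * X k.
  by rewrite big_ord_recl /ladder_cost expr0 subrr mulr0 mul0r add0r.
have payE : \sum_(k < m.+1) ladder_prob s m k * Pay k =
    \sum_(k < m) s ^+ (m - k) * (U k - U k.+1) + s ^+ (m - m) * U m +
    \sum_(k < m) ladder_prob s m k.+1 * ladder_cost s k.+1 * X k.+1.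
  rewrite shift -(sumr_by_parts (fun k => s ^+ (m - k))) -big_split /=.
  by apply: eq_bigr => k _; rewrite -ladder_probE /U; ring.
have rent k : (k < m)%N -> ladder_prob s m k.+1 * X k.+1 <=
    s ^+ (m - k) * (U k - U k.+1) + ladder_prob s m k.+1 * ladder_cost s k.+1 * X k.+1.
  move=> lt_km; have := ler_wpM2l (pow_ge0 k) (truthful k lt_km).
  have := congr1 ( *%R^~ (X k.+1)) (ladder_virtual_cost s _ _ lt_km).
  rewrite /U /=; nra.
have U_m_ge0 : 0 <= s ^+ (m - m) * U m by rewrite mulr_ge0 // /U subr_ge0.
have X0_term : s ^+ m * X 0%N <= s ^+ m.
  by rewrite ler_piMr ?exprn_ge0 //; case/andP: s01.
have sum_rent : \sum_(k < m) ladder_prob s m k.+1 * X k.+1 <=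
    \sum_(k < m) (s ^+ (m - k) * (U k - U k.+1) +
                  ladder_prob s m k.+1 * ladder_cost s k.+1 * X k.+1).
  by apply: ler_sum => k _; exact: rent.
move: sum_rent; rewrite payE big_ord_recl big_split /=; lra.
Qed.

End Ladder.

Section Numerics.
Context {R : realType}.

Lemma expRN1_le_pow (m : nat) : (expR 1)^-1 <= (1 - (m.+1%:R)^-1) ^+ m :> R.
Proof.
case: m => [|m]; first by rewrite expr0 invf_le1 ?expR_gt0 // ltW // expR_gt1.
have w_gt0 : 0 < m.+1%:R :> R by rewrite ltr0n.
have step : expR (- (m.+1%:R)^-1) <= 1 - (m.+2%:R)^-1 :> R.
  have -> : 1 - (m.+2%:R)^-1 = (1 + (m.+1%:R)^-1)^-1 :> R.
    by rewrite -natr1; field; rewrite !gt_eqF // ltr_wpDl ?invr_ge0 ?ltW.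
  by rewrite expRN lef_pV2 ?posrE ?expR_gt0 ?expR_ge1Dx.
have -> : (expR 1)^-1 = expR (- (m.+1%:R)^-1) ^+ m.+1 :> R.
  by rewrite -expRM_natl mulrN mulfV ?gt_eqF // expRN.
by rewrite lerXn2r ?nnegrE ?expR_ge0 // (le_trans _ step) ?expR_ge0.
Qed.

(* With [s = 1 - 1/(m+1)], the ladder's lowest atom and mean cost add up to
   [1 - (1 - 1/(m+1)) s^m], which tends to [1 - 1/e]. *)
Lemma exists_ladder {eta : R} : 0 < eta -> exists s m,
  0 <= s <= 1 /\ ladder_prob s m 0 + ladder_mean s m <= 1 - (expR 1)^-1 + eta.
Proof.
move=> eta_gt0; pose m := Num.truncn eta^-1; pose w : R := (m.+1%:R)^-1.
have w_gt0 : 0 < w by rewrite invr_gt0 ltr0n.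
have w_lt : w < eta by rewrite -[eta]invrK ltf_pV2 ?posrE ?invr_gt0 ?ltr0n ?truncnS_gt.
have w_le1 : w <= 1 by rewrite invf_le1 ?ltr0n // ler1n.
have mw : m%:R * w = 1 - w.
  by rewrite /w -[m%:R](addrK 1) natr1 mulrBl mulfV ?mul1r // lt0r_neq0 ?ltr0n.
exists (1 - w), m; split; first by apply/andP; split; lra.
rewrite ladder_meanE /= (_ : 1 - (1 - w) = w); last by ring.
have sm_ge := expRN1_le_pow m; rewrite -/w in sm_ge.
have sm_le1 : (1 - w) ^+ m <= 1 by rewrite exprn_ile1 //; lra.
have smw : (1 - w) ^+ m * w <= w := ler_piMl (ltW w_gt0) sm_le1.
by rewrite mulrCA mw; lra.
Qed.

Lemma exists_nat_large {eta theta0 A : R} : 0 < eta -> 0 < theta0 -> 0 <= A ->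
  exists n : nat, [/\ (0 < n)%N, (n%:R * eta)^-1 <= theta0 & A < n%:R * eta].
Proof.
move=> eta_gt0 theta0_gt0 A_ge0; pose n := Num.truncn ((eta * theta0)^-1 + A / eta).
have n_gt : (eta * theta0)^-1 + A / eta < n.+1%:R := truncnS_gt _.
exists n.+1; split => //.
  have : theta0^-1 / eta < n.+1%:R.
    by rewrite -invfM mulrC; apply: le_lt_trans n_gt; rewrite lerDl divr_ge0 // ltW.
  by rewrite ltr_pdivrMr // invf_ple ?posrE ?mulr_gt0 // => /ltW.
rewrite -ltr_pdivrMr //; apply: le_lt_trans n_gt.
by rewrite lerDr invr_ge0 ltW // mulr_gt0.
Qed.

Lemma Ustar1_ge_uniform {n} (c : 'I_n -> R) B t : 0 <= t <= 1 ->
  \sum_i c i * t <= B -> n%:R * t <= Ustar (fun=> 1) c B.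
Proof.
move=> t01 feas_t; rewrite /Ustar.
have ub : has_ubound [set \sum_(i < n) (fun=> 1 : R) i * a i | a in feasible_frac c B].
  exists n%:R => _ [a [a01 _] <-].
  rewrite (_ : n%:R = \sum_(i < n) 1); last by rewrite sumr_const card_ord.
  by apply: ler_sum => i _; rewrite mul1r; case/andP: (a01 i).
apply: (ub_le_sup ub); exists (fun=> t); first by [].
by rewrite (eq_bigr (fun=> t)) ?sumr_const ?card_ord ?mulr_natl // => i _; rewrite mul1r.
Qed.

Lemma Ustar1_ge_slack {n} (c : 'I_n -> R) B y : 0 < B -> 0 <= y ->
  \sum_i c i - B <= y -> n%:R - n%:R * y / B <= Ustar (fun=> 1) c B.
Proof.
move=> B_gt0 y_ge0 slack; have n_ge0 : 0 <= n%:R :> R by [].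
rewrite -mulrA; set z := y / B; set S := \sum_i c i in slack.
have {}slack : S - B <= z * B by rewrite /z divfK // gt_eqF.
have z_ge0 : 0 <= z by rewrite divr_ge0 // ltW.
have [z_le1|z_gt1] := lerP z 1.
  rewrite -{1}[n%:R]mulr1 -mulrBr; apply: Ustar1_ge_uniform.
    by apply/andP; split; lra.
  have z1 : 0 <= 1 - z by lra.
  rewrite -mulr_suml -/S; have := ler_wpM2r z1 slack.
  by have := mulr_ge0 (mulr_ge0 z_ge0 z_ge0) (ltW B_gt0); nra.
apply: (@le_trans _ _ (n%:R * 0)); first by nra.
apply: Ustar1_ge_uniform; first by rewrite lexx ler01.
by under eq_bigr do rewrite mulr0; rewrite big1 ?ltW.
Qed.

(* AM-GM turns the budget overshoot into a square, which is what a variance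
   bound controls. *)
Lemma Ustar1_ge_sqr {n} (c : 'I_n -> R) {B D} : 0 < B -> 0 < D ->
  n%:R - n%:R * (\sum_i c i - B + D) ^+ 2 / (4 * D * B) <= Ustar (fun=> 1) c B.
Proof.
move=> B_gt0 D_gt0; set x := \sum_i c i - B.
have -> : n%:R * (x + D) ^+ 2 / (4 * D * B) = n%:R * ((x + D) ^+ 2 / (4 * D)) / B.
  by field; rewrite !gt_eqF.
apply: Ustar1_ge_slack => //; first by rewrite divr_ge0 ?sqr_ge0 // mulr_ge0 // ltW.
by rewrite -/x ler_pdivlMr ?mulr_gt0 //; have := sqr_ge0 (x - D); nra.
Qed.

End Numerics.

Section ProductWeight.
Context {R : comRingType} {L : finType} (f : L -> R) {n : nat}.
Hypothesis f_sum1 : \sum_k f k = 1.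

Definition pweight (p : {ffun 'I_n -> L}) := \prod_i f (p i).
Definition ffun_set (p : {ffun 'I_n -> L}) (i : 'I_n) (k : L) : {ffun 'I_n -> L} :=
  [ffun j => if j == i then k else p j].

Lemma ffun_setK p i k : ffun_set (ffun_set p i k) i (p i) = p.
Proof. by apply/ffunP => j; rewrite !ffunE; case: eqP => // ->. Qed.

Lemma ffun_set_eq p i k : ffun_set p i k i = k.
Proof. by rewrite ffunE eqxx. Qed.

Lemma pweight_sum : \sum_p pweight p = 1.
Proof.
rewrite /pweight -(bigA_distr_bigA (fun _ k => f k)) /=.
by rewrite big1 // => i _; exact: f_sum1.
Qed.

(* The pair (p, k) |-> (p with coordinate i set to k, p i) is a bijection on
   profiles x atoms: redrawing one coordinate leaves the distribution
   unchanged. *)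
Lemma sum_pweight_resample (F : {ffun 'I_n -> L} -> R) i :
  \sum_p pweight p * F p = \sum_p pweight p * \sum_k f k * F (ffun_set p i k).
Proof.
pose W p := \prod_(j | j != i) f (p j).
have pweightE p : pweight p = f (p i) * W p by rewrite /pweight (bigD1 i).
have W_set p k : W (ffun_set p i k) = W p.
  by apply: eq_bigr => j /negbTE ji; rewrite ffunE ji.
pose g (q : {ffun 'I_n -> L} * L) :=
  f (q.1 i) * W q.1 * f q.2 * F (ffun_set q.1 i q.2).
have -> : \sum_p pweight p * \sum_k f k * F (ffun_set p i k) = \sum_q g q.
  rewrite (eq_bigr (fun q => g (q.1, q.2))); last by case.
  rewrite -(pair_bigA _ (fun p k => g (p, k))) /=; apply: eq_bigr => p _.
  by rewrite mulr_sumr; apply: eq_bigr => k _; rewrite /g /= pweightE; ring.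
pose h (q : {ffun 'I_n -> L} * L) := (ffun_set q.1 i q.2, q.1 i).
have h_inj : injective h.
  move=> [p1 k1] [p2 k2] /= [] e1 e2.
  have := congr1 (fun p => ffun_set p i (p1 i)) e1.
  rewrite /= ffun_setK e2 ffun_setK => ep; subst p2.
  by rewrite -(ffun_set_eq p1 i k1) e1 ffun_set_eq.
rewrite (reindex_inj h_inj) (eq_bigr (fun q => g (h (q.1, q.2)))); last by case.
rewrite -(pair_bigA _ (fun p k => g (h (p, k)))) /=; apply: eq_bigr => p _.
rewrite /g /h /= -[LHS]mulr1 -f_sum1 mulr_sumr; apply: eq_bigr => k _.
by rewrite ffun_set_eq W_set ffun_setK pweightE; ring.
Qed.

Lemma sum_pweight_coord (g : L -> R) i :
  \sum_p pweight p * g (p i) = \sum_k f k * g k.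
Proof.
rewrite (sum_pweight_resample (fun p => g (p i)) i).
under eq_bigr do under eq_bigr do rewrite ffun_set_eq.
by rewrite -mulr_suml pweight_sum mul1r.
Qed.

Lemma sum_pweight_coord2 (g h : L -> R) i j : i != j ->
  \sum_p pweight p * (g (p i) * h (p j)) = (\sum_k f k * g k) * (\sum_k f k * h k).
Proof.
move=> ij; rewrite (sum_pweight_resample (fun p => g (p i) * h (p j)) i).
have set_j p k : ffun_set p i k j = p j by rewrite ffunE eq_sym (negbTE ij).
under eq_bigr do under eq_bigr do rewrite ffun_set_eq set_j mulrA.
under eq_bigr do rewrite -mulr_suml mulrCA.
by rewrite -mulr_sumr sum_pweight_coord.
Qed.

End ProductWeight.

Lemma sum_pweight_sqr_le {R : numDomainType} {L : finType} {f g : L -> R} {n : nat} :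
  \sum_k f k = 1 -> (forall k, 0 <= f k) ->
  \sum_k f k * g k = 0 -> (forall k, g k ^+ 2 <= 1) ->
  \sum_(p : {ffun 'I_n -> L}) pweight f p * (\sum_i g (p i)) ^+ 2 <= n%:R.
Proof.
move=> f_sum1 f_ge0 g_mean0 g_le1.
have -> : \sum_(p : {ffun 'I_n -> L}) pweight f p * (\sum_i g (p i)) ^+ 2 =
    \sum_i \sum_j \sum_(p : {ffun 'I_n -> L}) pweight f p * (g (p i) * g (p j)).
  symmetry; under eq_bigr do rewrite exchange_big /=.
  rewrite exchange_big /=; apply: eq_bigr => p _.
  rewrite expr2 mulr_suml mulr_sumr; apply: eq_bigr => i _.
  by rewrite !mulr_sumr; apply: eq_bigr => j _; ring.
rewrite (_ : n%:R = \sum_(i < n) 1); last by rewrite sumr_const card_ord.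
apply: ler_sum => i _.
rewrite (bigD1 i) //= [X in _ + X]big1 ?addr0; last first.
  by move=> j ji; rewrite (sum_pweight_coord2 _ f_sum1) 1?eq_sym // g_mean0 mul0r.
rewrite (sum_pweight_coord _ f_sum1 (fun k => g k * g k)) -f_sum1.
by apply: ler_sum => k _; rewrite -expr2 ler_piMr.
Qed.

(* [fine] sends an infinite expectation to 0; the expectations of allocations
   and payments are finite ([expect_allocE], [expect_payE]). *)
Definition ealloc {R : realType} {d} {Omega : measurableType d}
    (P : probability Omega R) (M : mechanism R Omega) {n} B (u c : 'I_n -> R) i :=
  fine (expect P (fun w => alloc M B u c w i)).
Definition epay {R : realType} {d} {Omega : measurableType d}
    (P : probability Omega R) (M : mechanism R Omega) {n} B (u c : 'I_n -> R) i :=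
  fine (expect P (fun w => pay M B u c w i)).

Section Expectations.
Context {R : realType} {d : measure_display} {Omega : measurableType d}.
Context {P : probability Omega R} {M : mechanism R Omega}.
Hypotheses (wf : well_formed M) (bf : BF_in_expectation P M).

Local Open Scope ereal_scope.

Section Instance.
Context {n : nat} {B : R} {u c : 'I_n -> R}.
Hypotheses (vi : valid_instance B u) (nc : nonneg_costs c).

Lemma expect_pay_sum_le :
  \sum_i expect P (fun w => pay M B u c w i) <= B%:E.
Proof.
have := bf _ _ _ _ vi nc; rewrite /expect.
under eq_integral do rewrite -sumEFin.
rewrite ge0_integral_sum // => i.
  by apply/measurable_realfun.measurable_EFinP; case: (wf _ _ _ _ vi nc i) => _ [].
by move=> w _; case: (wf _ _ _ _ vi nc i) => _ [_ /(_ w) [_]]; rewrite lee_fin.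
Qed.

Lemma alloc_integrable i : P.-integrable setT (EFin \o fun w => alloc M B u c w i).
Proof.
have [alloc_mf [_ alloc01]] := wf _ _ _ _ vi nc i.
apply: (le_integrable _ _ _ (finite_measure_integrable_cst P 1 measurableT)) => //.
  exact/measurable_realfun.measurable_EFinP.
move=> w _ /=; have [/andP[x0 x1] _] := alloc01 w.
by rewrite lee_fin !ger0_norm.
Qed.

Lemma pay_integrable i : P.-integrable setT (EFin \o fun w => pay M B u c w i).
Proof.
have [_ [pay_mf pay_ge0]] := wf _ _ _ _ vi nc i.
have pay_le : expect P (fun w => pay M B u c w i) <= B%:E.
  apply: (le_trans _ (expect_pay_sum_le)).
  rewrite (bigD1 i) //= leeDl // sume_ge0 // => j _; apply: integral_ge0 => w _.
  by case: (wf _ _ _ _ vi nc j) => _ [_ /(_ w) [_]]; rewrite lee_fin.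
apply/integrableP; split; first exact/measurable_realfun.measurable_EFinP.
rewrite (eq_integral (EFin \o fun w => pay M B u c w i)); last first.
  by move=> w _ /=; rewrite ger0_norm //; case: (pay_ge0 w).
exact: le_lt_trans pay_le (ltry B).
Qed.

Lemma expect_allocE i : expect P (fun w => alloc M B u c w i) = (ealloc P M B u c i)%:E.
Proof. by rewrite /ealloc fineK // (integrable_fin_num measurableT (alloc_integrable i)). Qed.

Lemma expect_payE i : expect P (fun w => pay M B u c w i) = (epay P M B u c i)%:E.
Proof. by rewrite /epay fineK // (integrable_fin_num measurableT (pay_integrable i)). Qed.

Lemma ealloc_le1 i : (ealloc P M B u c i <= 1)%R.
Proof.
have [alloc_mf [_ alloc01]] := wf _ _ _ _ vi nc i.
have int1 : \int[P]_w (cst 1%:E) w = 1%:E.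
  by rewrite integral_cst // -[X in _ * X]/(P setT) probability_setT mule1.
rewrite -lee_fin -expect_allocE -int1; apply: ge0_le_integral => //.
- by move=> w _; case: (alloc01 w) => /andP[].
- exact/measurable_realfun.measurable_EFinP.
- by move=> w _; case: (alloc01 w) => /andP[_ x1] _; rewrite /= lee_fin.
Qed.

Lemma epay_sum_le : (\sum_i epay P M B u c i <= B)%R.
Proof.
rewrite -lee_fin -sumEFin; apply: (le_trans _ (expect_pay_sum_le)).
by under eq_bigr do rewrite -expect_payE.
Qed.

Lemma expect_pay_subE i (k : R) :
  expect P (fun w => pay M B u c w i - k * alloc M B u c w i)%R =
  (epay P M B u c i - k * ealloc P M B u c i)%:E.
Proof.
have kalloc_int : P.-integrable setT (EFin \o fun w => k * alloc M B u c w i)%R.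
  have -> : EFin \o (fun w => k * alloc M B u c w i)%R =
            (fun w => k%:E * (EFin \o fun w => alloc M B u c w i) w).
    by apply/funext => w /=; rewrite EFinM.
  exact/integrableZl/alloc_integrable.
rewrite /expect; under eq_integral do rewrite EFinB.
rewrite integralB_EFin ?pay_integrable // -/(expect P _) expect_payE.
under eq_integral do rewrite EFinM.
by rewrite integralZl ?alloc_integrable // -/(expect P _) expect_allocE.
Qed.

Lemma expected_utilityE :
  expected_utility P M B u c = (\sum_i u i * ealloc P M B u c i)%:E.
Proof.
rewrite /expected_utility /expect; under eq_integral do rewrite -sumEFin.
rewrite integral_sum // => [|i]; last first.
  have -> : (fun w => (u i * alloc M B u c w i)%:E) =
            (fun w => (u i)%:E * (EFin \o fun w => alloc M B u c w i) w).
    by apply/funext => w /=; rewrite EFinM.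
  exact/integrableZl/alloc_integrable.
rewrite -sumEFin; apply: eq_bigr => i _; under eq_integral do rewrite EFinM.
by rewrite integralZl ?alloc_integrable // -/(expect P _) expect_allocE.
Qed.

End Instance.

Lemma truthful_epay (tr : truthful_in_expectation P M) {n B} {u c : 'I_n -> R} i {b} :
  valid_instance B u -> nonneg_costs c -> (0 <= b)%R ->
  (epay P M B u (upd c i b) i - c i * ealloc P M B u (upd c i b) i
    <= epay P M B u c i - c i * ealloc P M B u c i)%R.
Proof.
move=> vi nc b_ge0; have nc' : nonneg_costs (upd c i b).
  by move=> j; rewrite /upd; case: ifP.
by have := tr _ _ _ _ vi nc i b b_ge0; rewrite !expect_pay_subE // lee_fin.
Qed.

Lemma IR_epay (ir : IR_in_expectation P M) {n B} {u c : 'I_n -> R} i :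
  valid_instance B u -> nonneg_costs c -> (c i * ealloc P M B u c i <= epay P M B u c i)%R.
Proof.
by move=> vi nc; have := ir _ _ _ _ vi nc i; rewrite expect_allocE ?expect_payE // lee_fin.
Qed.

End Expectations.

Section LadderInstances.
Context {R : realType} {d : measure_display} {Omega : measurableType d}.
Context {P : probability Omega R} {M : mechanism R Omega}.
Hypotheses (wf : well_formed M) (ir : IR_in_expectation P M)
  (tr : truthful_in_expectation P M) (bf : BF_in_expectation P M).
Variables (m n : nat).
Context {s eta : R}.
Hypotheses (s01 : 0 <= s <= 1) (eta_gt0 : 0 < eta) (n_gt0 : (0 < n)%N).

Let f (k : 'I_m.+1) := ladder_prob s m k.
Let B := n%:R * (ladder_mean s m + eta).
Let u1 : 'I_n -> R := fun=> 1.
Let cost (p : {ffun 'I_n -> 'I_m.+1}) i := ladder_cost s (p i).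

Let f_sum1 : \sum_k f k = 1. Proof. exact: ladder_prob_sum. Qed.

Let pweight_ge0 (p : {ffun 'I_n -> 'I_m.+1}) : 0 <= pweight f p.
Proof. by apply: prodr_ge0 => i _; exact: ladder_prob_ge0. Qed.

Let B_ge : n%:R * eta <= B.
Proof.
rewrite ler_pM2l ?ltr0n // lerDr.
by case/andP: (ladder_mean_itv s01 m).
Qed.

Let B_gt0 : 0 < B.
Proof. by apply: lt_le_trans B_ge; rewrite mulr_gt0 ?ltr0n. Qed.

Let ladder_valid : valid_instance B u1.
Proof. by split=> // i; exact: ltr01. Qed.

Let cost_ge0 p : nonneg_costs (cost p).
Proof. by move=> i; case/andP: (ladder_cost_itv s01 (p i)). Qed.

Lemma ladder_cmax_ratio p : cmax (cost p) / B <= (n%:R * eta)^-1.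
Proof.
have cmax_le1 : cmax (cost p) <= 1.
  by apply: bigmax_le => // i _; case/andP: (ladder_cost_itv s01 (p i)).
apply: (@le_trans _ _ (1 / B)); first by rewrite ler_pM2r ?invr_gt0.
by rewrite div1r lef_pV2 ?posrE ?B_ge // mulr_gt0 ?ltr0n.
Qed.

Lemma ladder_resampled_alloc_le p i :
  \sum_k f k * ealloc P M B u1 (cost (ffun_set p i k)) i
    <= \sum_k f k * epay P M B u1 (cost (ffun_set p i k)) i + ladder_prob s m 0.
Proof.
pose q k := ffun_set p i (inord k).
pose X k := ealloc P M B u1 (cost (q k)) i.
pose Pay k := epay P M B u1 (cost (q k)) i.
have costE k : (k <= m)%N -> cost (q k) i = ladder_cost s k.
  by move=> le_km; rewrite /cost ffunE eqxx inordK.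
have sumE (F : {ffun 'I_n -> 'I_m.+1} -> R) :
    \sum_k f k * F (ffun_set p i k) = \sum_(k < m.+1) ladder_prob s m k * F (q k).
  by apply: eq_bigr => k _; rewrite /q inord_val.
rewrite (sumE (fun p => ealloc P M B u1 (cost p) i)).
rewrite (sumE (fun p => epay P M B u1 (cost p) i)) -lerBlDr.
apply: (@ladder_myerson _ _ s01 m X Pay).
- move=> k lt_km; have upd_next : upd (cost (q k)) i (ladder_cost s k.+1) = cost (q k.+1).
    by apply/funext => j; rewrite /upd /cost !ffunE; case: eqP => // _; rewrite inordK.
  have := truthful_epay wf bf tr i ladder_valid (cost_ge0 (q k))
    (proj1 (andP (ladder_cost_itv s01 k.+1))).
  by rewrite upd_next costE // ltnW.
- by have := IR_epay wf bf ir i ladder_valid (cost_ge0 (q m)); rewrite costE.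
- exact: (ealloc_le1 wf ladder_valid (cost_ge0 (q 0%N)) i).
Qed.

Lemma ladder_total_alloc_le :
  \sum_p pweight f p * \sum_i ealloc P M B u1 (cost p) i
    <= B + n%:R * ladder_prob s m 0.
Proof.
have alloc_le i : \sum_p pweight f p * ealloc P M B u1 (cost p) i <=
    \sum_p pweight f p * epay P M B u1 (cost p) i + ladder_prob s m 0.
  rewrite (sum_pweight_resample _ f_sum1 (fun p => ealloc P M B u1 (cost p) i) i).
  rewrite (sum_pweight_resample _ f_sum1 (fun p => epay P M B u1 (cost p) i) i).
  rewrite -[X in _ + X]mul1r -(pweight_sum (n := n) _ f_sum1) mulr_suml -big_split /=.
  apply: ler_sum => p _; rewrite -mulrDr ler_wpM2l //.
  exact: ladder_resampled_alloc_le.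
under eq_bigr do rewrite mulr_sumr; rewrite exchange_big /=.
apply: le_trans (ler_sum _ (fun i _ => alloc_le i)) _.
rewrite big_split sumr_const card_ord mulr_natl lerD2r exchange_big.
apply: le_trans (_ : \sum_p pweight f p * B <= B); last first.
  by rewrite -mulr_suml pweight_sum // mul1r.
apply: ler_sum => p _; rewrite -mulr_sumr ler_wpM2l //.
exact: (epay_sum_le wf bf ladder_valid (cost_ge0 p)).
Qed.

Lemma ladder_expect_Ustar_ge :
  n%:R - (4 * eta ^+ 2)^-1 <= \sum_p pweight f p * Ustar u1 (cost p) B.
Proof.
pose x (p : {ffun 'I_n -> 'I_m.+1}) := \sum_i (ladder_cost s (p i) - ladder_mean s m).
have nD_gt0 : 0 < n%:R * eta by rewrite mulr_gt0 ?ltr0n.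
have xE p : \sum_i cost p i - B + n%:R * eta = x p.
  rewrite /x [RHS]sumrB sumr_const card_ord -[ladder_mean s m *+ n]mulr_natl.
  by rewrite /B /cost; ring.
have var_x : \sum_p pweight f p * x p ^+ 2 <= n%:R.
  apply: (sum_pweight_sqr_le (g := fun k : 'I_m.+1 => ladder_cost s k - ladder_mean s m) f_sum1).
  - exact: ladder_prob_ge0.
  - rewrite (eq_bigr (fun k => f k * ladder_cost s k - f k * ladder_mean s m)).
      by rewrite sumrB -mulr_suml f_sum1 mul1r subrr.
    by move=> k _; rewrite mulrBr.
  - move=> k; case/andP: (ladder_cost_itv s01 k) => c0 c1.
    case/andP: (ladder_mean_itv s01 m) => m0 m1; rewrite expr2; nra.
have tail : (4 * eta * B)^-1 * \sum_p pweight f p * x p ^+ 2 <= (4 * eta ^+ 2)^-1.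
  have K_gt0 : 0 < 4 * eta * B by do 2 apply: mulr_gt0 => //.
  apply: (@le_trans _ _ ((4 * eta * B)^-1 * n%:R)).
    by apply: ler_wpM2l; rewrite // invr_ge0 ltW.
  have eta2_gt0 : 0 < 4 * eta ^+ 2 by rewrite mulr_gt0 ?exprn_gt0.
  rewrite [_ * n%:R]mulrC ler_pdivrMr // mulrC ler_pdivlMr //.
  by have := B_ge; nra.
apply: le_trans (lerB (lexx _) tail) _.
have avgE : \sum_p pweight f p * (n%:R - x p ^+ 2 / (4 * eta * B)) =
    n%:R - (4 * eta * B)^-1 * \sum_p pweight f p * x p ^+ 2.
  rewrite mulr_sumr -[n%:R in RHS]mul1r -(pweight_sum (n := n) _ f_sum1) mulr_suml -sumrB.
  by apply: eq_bigr => p _; ring.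
rewrite -avgE; apply: ler_sum => p _; rewrite ler_wpM2l //.
apply: (le_trans _ (Ustar1_ge_sqr (cost p) B_gt0 nD_gt0)); rewrite xE.
rewrite [X in _ <= _ - X](_ : _ = x p ^+ 2 / (4 * eta * B)) //.
by field; rewrite !gt_eqF ?ltr0n.
Qed.

Lemma ladder_approx_bound {alpha theta0 : R} :
  0 <= alpha -> (n%:R * eta)^-1 <= theta0 ->
  (forall k B (u c : 'I_k -> R), valid_instance B u -> nonneg_costs c ->
     cmax c / B <= theta0 ->
     ((alpha * Ustar u c B)%:E <= expected_utility P M B u c)%E) ->
  alpha * (n%:R - (4 * eta ^+ 2)^-1) <= B + n%:R * ladder_prob s m 0.
Proof.
move=> alpha_ge0 ratio_le approx; apply: le_trans ladder_total_alloc_le.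
apply: le_trans (ler_wpM2l alpha_ge0 ladder_expect_Ustar_ge) _.
rewrite mulr_sumr; apply: ler_sum => p _; rewrite mulrCA ler_wpM2l //.
have := approx _ _ _ _ ladder_valid (cost_ge0 p) (le_trans (ladder_cmax_ratio p) ratio_le).
rewrite (expected_utilityE wf ladder_valid (cost_ge0 p)) lee_fin.
by under eq_bigr do rewrite mul1r.
Qed.

End LadderInstances.

Theorem corollary1 (R : realType) (d : measure_display)
  (Omega : measurableType d) (P : probability Omega R)
  (M : mechanism R Omega) (alpha theta0 : R) :
  well_formed M -> IR_in_expectation P M ->
  truthful_in_expectation P M -> BF_in_expectation P M ->
  1 - (expR 1)^-1 < alpha -> 0 < theta0 ->
  ~ (forall (n : nat) (B : R) (u c : 'I_n -> R),
       valid_instance B u -> nonneg_costs c -> cmax c / B <= theta0 ->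
       ((alpha * Ustar u c B)%:E <= expected_utility P M B u c)%E).
Proof.
move=> wf ir tr bf alpha_gt theta0_gt0 approx.
have einv_gt0 : 0 < (expR 1)^-1 :> R by rewrite invr_gt0 expR_gt0.
have einv_lt1 : (expR 1)^-1 < 1 :> R by rewrite invf_lt1 ?expR_gt0 // expR_gt1.
pose eta := (alpha - (1 - (expR 1)^-1)) / 3.
have eta_gt0 : 0 < eta by rewrite divr_gt0 // subr_gt0.
have alpha_ge0 : 0 <= alpha by lra.
have [s [m [s01 mass]]] := exists_ladder eta_gt0.
pose A := alpha / (4 * eta ^+ 2).
have A_ge0 : 0 <= A by rewrite divr_ge0 // mulr_ge0 // exprn_ge0 // ltW.
have [n [n_gt0 ratio A_lt]] := exists_nat_large eta_gt0 theta0_gt0 A_ge0.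
have := ladder_approx_bound wf ir tr bf m n s01 eta_gt0 n_gt0 alpha_ge0 ratio approx.
have eta3 : 3 * eta = alpha - (1 - (expR 1)^-1) by rewrite /eta mulrC divfK ?pnatr_eq0.
rewrite -mulrDr mulrBr -/A -addrA [_ + ladder_prob _ _ _]addrC.
by have := ler_wpM2l (ler0n R n) mass; nra.
Qed.
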